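(* Let $a,b\in\mathbb{Z}[\tau]$ with $0<a<b<1$, and let $f\in F_\tau'=[F_\tau,F_\tau]$ be such that $f\in F_\tau^c[a,b]$. Then $f\in F_\tau'[a,b]$.
   Context: Let $\tau=(\sqrt5-1)/2$. $F_\tau$ is the group, under composition, of orientation-preserving homeomorphisms of $[0,1]$ that are piecewise linear with finitely many breakpoints, all breakpoints in $\mathbb{Z}[\tau]=\{a+b\tau:a,b\in\mathbb{Z}\}$ and all slopes integer powers of $\tau$. $F_\tau[a,b]$ is the subgroup of elements of $F_\tau$ that are the identity outside $[a,b]$; $F_\tau'[a,b]$ is the commutator subgroup of $F_\tau[a,b]$; $F_\tau^c[a,b]$ is the subgroup of elements of $F_\tau[a,b]$ whose support is contained in $[a+\varepsilon,b-\varepsilon]$ for some $\varepsilon>0$. *)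

From Stdlib Require Import Reals ZArith.
Open Scope R_scope.

Definition tau : R := (sqrt 5 - 1) / 2.

Definition in_Ztau (x : R) : Prop := exists p q : Z, x = IZR p + IZR q * tau.

(* Elements of F_tau, represented as maps R -> R that are the identity
   outside [0,1].  Such an f is
   an orientation-preserving PL homeomorphism of [0,1] with breakpoints in
   Z[tau] and slopes integer powers of tau, and conversely. *)
Definition is_Ftau (f : R -> R) : Prop :=
  (forall x, (x < 0 \/ 1 < x) -> f x = x) /\
  f 0 = 0 /\ f 1 = 1 /\
  exists (n : nat) (xs : nat -> R) (ks : nat -> Z),
    xs 0%nat = 0 /\ xs n = 1 /\
    (forall i, (i < n)%nat -> xs i < xs (S i)) /\
    (forall i, (i <= n)%nat -> in_Ztau (xs i)) /\
    (forall i, (i < n)%nat -> forall y, xs i <= y <= xs (S i) ->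
        f y = f (xs i) + powerRZ tau (ks i) * (y - xs i)).

Definition is_Ftau_ab (a b : R) (f : R -> R) : Prop :=
  is_Ftau f /\ forall x, (x < a \/ b < x) -> f x = x.

Definition is_Ftau_c (a b : R) (f : R -> R) : Prop :=
  is_Ftau_ab a b f /\
  exists eps, 0 < eps /\ forall x, f x <> x -> a + eps <= x <= b - eps.

Definition is_commutator (G : (R -> R) -> Prop) (c : R -> R) : Prop :=
  exists g h gi hi : R -> R,
    G g /\ G h /\ G gi /\ G hi /\
    (forall x, gi (g x) = x) /\ (forall x, g (gi x) = x) /\
    (forall x, hi (h x) = x) /\ (forall x, h (hi x) = x) /\
    c = (fun x => gi (hi (g (h x)))).

Inductive gen (S : (R -> R) -> Prop) : (R -> R) -> Prop :=
| gen_id : gen S (fun x => x)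
| gen_base : forall f, S f -> gen S f
| gen_comp : forall f g, gen S f -> gen S g -> gen S (fun x => f (g x))
| gen_inv : forall f g, gen S f -> (forall x, g (f x) = x) ->
    (forall x, f (g x) = x) -> gen S g.

Definition in_Ftau' (f : R -> R) : Prop := gen (is_commutator is_Ftau) f.
Definition in_Ftau'_ab (a b : R) (f : R -> R) : Prop :=
  gen (is_commutator (is_Ftau_ab a b)) f.

(* Choose [c = a + τ^n] and [d = b - τ^n] with the support of [f] inside [[c, d]]. There is a
   homeomorphism [ψ] of [R], piecewise linear with breakpoints in [Z[τ]] and slopes powers of [τ],
   that maps [[0, 1]] onto [[a, b]] and is the identity on [[c, d]]: on each of [[0, c]] and
   [[d, 1]] a single breakpoint suffices, because [τ^(m-1) x + τ^(m+1) (L - x) = L'] has a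
   solution [x] in [(0, L) ∩ Z[τ]] for a suitable [m]. Conjugation [g ↦ ψ g ψ⁻¹] is a
   homomorphism from [F_τ] to [F_τ[a, b]], so it maps [F_τ'] into [F_τ'[a, b]]; and it fixes
   [f], because [ψ] is the identity where [f] moves points. *)

From Stdlib Require Import Reals ZArith Lra Lia List Classical FunctionalExtensionality.
Open Scope R_scope.

(** * The ring Z[τ] *)

Lemma sqrt5_bounds : 2 < sqrt 5 < 3.
Proof. pose proof (sqrt_sqrt 5 ltac:(lra)); pose proof (sqrt_pos 5); nra. Qed.

Lemma tau_pos : 0 < tau.
Proof. unfold tau; pose proof sqrt5_bounds; lra. Qed.

Lemma tau_lt_1 : tau < 1.
Proof. unfold tau; pose proof sqrt5_bounds; lra. Qed.

Lemma tau_neq0 : tau <> 0.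
Proof. pose proof tau_pos; lra. Qed.

Lemma tau_sqr : tau * tau = 1 - tau.
Proof. unfold tau; pose proof (sqrt_sqrt 5 ltac:(lra)); nra. Qed.

Lemma tau_inv : / tau = 1 + tau.
Proof. pose proof tau_sqr; pose proof tau_pos; field_simplify_eq; lra. Qed.

Lemma Ztau_IZR z : in_Ztau (IZR z).
Proof. exists z, 0%Z; ring. Qed.

Lemma Ztau_0 : in_Ztau 0.
Proof. exact (Ztau_IZR 0). Qed.

Lemma Ztau_1 : in_Ztau 1.
Proof. exact (Ztau_IZR 1). Qed.

Lemma Ztau_tau : in_Ztau tau.
Proof. exists 0%Z, 1%Z; ring. Qed.

Lemma Ztau_add x y : in_Ztau x -> in_Ztau y -> in_Ztau (x + y).
Proof. intros [p [q ->]] [r [s ->]]. exists (p + r)%Z, (q + s)%Z. rewrite !plus_IZR; ring. Qed.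

Lemma Ztau_opp x : in_Ztau x -> in_Ztau (- x).
Proof. intros [p [q ->]]. exists (- p)%Z, (- q)%Z. rewrite !opp_IZR; ring. Qed.

Lemma Ztau_sub x y : in_Ztau x -> in_Ztau y -> in_Ztau (x - y).
Proof. intros Hx Hy. apply Ztau_add; [exact Hx | apply Ztau_opp, Hy]. Qed.

Lemma Ztau_mul x y : in_Ztau x -> in_Ztau y -> in_Ztau (x * y).
Proof.
  intros [p [q ->]] [r [s ->]].
  exists (p * r + q * s)%Z, (p * s + q * r - q * s)%Z.
  rewrite minus_IZR, !plus_IZR, !mult_IZR.
  replace ((IZR p + IZR q * tau) * (IZR r + IZR s * tau))
    with (IZR p * IZR r + (IZR p * IZR s + IZR q * IZR r) * tau + IZR q * IZR s * (tau * tau))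
    by ring.
  rewrite tau_sqr; ring.
Qed.

Lemma Ztau_pow x n : in_Ztau x -> in_Ztau (x ^ n).
Proof. intros Hx; induction n; simpl; [exact Ztau_1 | apply Ztau_mul; assumption]. Qed.

Lemma Ztau_powerRZ k : in_Ztau (powerRZ tau k).
Proof.
  destruct k; simpl.
  - exact Ztau_1.
  - apply Ztau_pow, Ztau_tau.
  - rewrite <- pow_inv, tau_inv. apply Ztau_pow, Ztau_add; [exact Ztau_1 | exact Ztau_tau].
Qed.

Lemma tau_pow_lt r : 0 < r -> exists n, tau ^ n < r.
Proof.
  intros Hr.
  assert (Htau : Rabs tau < 1) by (rewrite Rabs_pos_eq; pose proof tau_pos; pose proof tau_lt_1; lra).
  destruct (pow_lt_1_zero tau Htau r Hr) as [n Hn]. exists n.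
  specialize (Hn n (le_n n)). rewrite Rabs_pos_eq in Hn; [exact Hn | apply pow_le; pose proof tau_pos; lra].
Qed.

Lemma tau_powerRZ_bracket r : 0 < r -> exists m : Z, powerRZ tau (m + 1) < r <= powerRZ tau m.
Proof.
  intros Hr.
  assert (Hln : ln tau < 0) by (rewrite <- ln_1; apply ln_increasing; [exact tau_pos | exact tau_lt_1]).
  set (q := ln r / ln tau).
  assert (Hq : q * ln tau = ln r) by (unfold q; field; lra).
  destruct (archimed q) as [Hup1 Hup2].
  exists (up q - 1)%Z.
  replace (up q - 1 + 1)%Z with (up q) by ring.
  rewrite !powerRZ_Rpower by exact tau_pos. unfold Rpower.
  rewrite <- (exp_ln r Hr), <- Hq, minus_IZR. split.
  - apply exp_increasing. nra.
  - assert (Hle : q * ln tau <= (IZR (up q) - 1) * ln tau) by nra.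
    destruct Hle as [Hlt | ->]; [left; apply exp_increasing, Hlt | right; reflexivity].
Qed.

(** * Piecewise linear maps with slopes powers of τ *)

Definition tau_affine_on (f : R -> R) (u v : R) : Prop :=
  exists k : Z, forall y, u <= y <= v -> f y = f u + powerRZ tau k * (y - u).

Definition tau_pl_breaks (lo hi : R) (S : list R) (f : R -> R) : Prop :=
  forall u v, lo <= u -> u < v -> v <= hi ->
    (forall s, In s S -> ~ (u < s < v)) -> tau_affine_on f u v.

Definition tau_pl (lo hi : R) (f : R -> R) : Prop :=
  exists S, (forall s, In s S -> in_Ztau s) /\ tau_pl_breaks lo hi S f.

Lemma tau_affine_on_ext f g u v :
  tau_affine_on g u v -> (forall y, u <= y <= v -> f y = g y) -> u <= v -> tau_affine_on f u v.
Proof.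
  intros [k Hk] E Huv. exists k. intros y Hy.
  rewrite (E y Hy), (E u) by lra. apply Hk, Hy.
Qed.

Lemma tau_affine_on_comp F G u v : u <= v ->
  tau_affine_on G u v -> tau_affine_on F (G u) (G v) -> tau_affine_on (fun y => F (G y)) u v.
Proof.
  intros Huv [k Hk] [l Hl]. exists (l + k)%Z. intros y Hy.
  pose proof (powerRZ_lt tau k tau_pos).
  assert (HGy : G u <= G y <= G v) by (rewrite (Hk y Hy), (Hk v) by lra; nra).
  rewrite (Hl (G y) HGy), (Hk y Hy), powerRZ_add by exact tau_neq0. ring.
Qed.

Lemma tau_pl_id lo hi : tau_pl lo hi (fun y => y).
Proof.
  exists nil. split; [intros s [] |].
  intros u v _ _ _ _. exists 0%Z. intros y _. simpl. ring.
Qed.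

Lemma tau_pl_ext lo hi f g : tau_pl lo hi g -> (forall y, lo <= y <= hi -> f y = g y) -> tau_pl lo hi f.
Proof.
  intros [S [ZS HS]] E. exists S. split; [exact ZS |].
  intros u v Hu Huv Hv Hs. apply (tau_affine_on_ext f g); [apply HS; auto | | lra].
  intros y Hy. apply E. lra.
Qed.

Lemma tau_pl_glue lo m hi f : in_Ztau m -> tau_pl lo m f -> tau_pl m hi f -> tau_pl lo hi f.
Proof.
  intros Zm [S1 [Z1 H1]] [S2 [Z2 H2]]. exists (m :: S1 ++ S2). split.
  - intros s [<- | Hs]; [exact Zm |]. apply in_app_or in Hs as [Hs | Hs]; auto.
  - intros u v Hu Huv Hv Hs.
    assert (Hs12 : forall s, In s S1 \/ In s S2 -> ~ (u < s < v))
      by (intros s Hin; apply Hs; right; apply in_or_app, Hin).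
    destruct (Rle_dec v m); [apply H1; auto; intros s Hin; apply Hs12; left; exact Hin |].
    destruct (Rle_dec m u); [apply H2; auto; intros s Hin; apply Hs12; right; exact Hin |].
    exfalso. apply (Hs m); [left; reflexivity | lra].
Qed.

Lemma tau_pl_comp lo1 hi1 lo2 hi2 F G Gi :
  tau_pl lo1 hi1 G -> tau_pl lo2 hi2 F ->
  (forall y, lo1 <= y <= hi1 -> lo2 <= G y <= hi2) ->
  (forall y, lo1 <= y <= hi1 -> Gi (G y) = y) ->
  (forall z, in_Ztau z -> in_Ztau (Gi z)) ->
  tau_pl lo1 hi1 (fun y => F (G y)).
Proof.
  intros [S1 [Z1 HG]] [S2 [Z2 HF]] Hmap Hinv ZGi.
  exists (S1 ++ map Gi S2). split.
  - intros s Hs. apply in_app_or in Hs as [Hs | Hs]; auto.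
    apply in_map_iff in Hs as [z [<- Hz]]. auto.
  - intros u v Hu Huv Hv Hs.
    assert (HGuv : tau_affine_on G u v)
      by (apply HG; auto; intros s Hin; apply Hs, in_or_app; auto).
    apply tau_affine_on_comp; [lra | exact HGuv |].
    destruct HGuv as [k Hk]. pose proof (powerRZ_lt tau k tau_pos) as Hpk.
    assert (HGv : G v = G u + powerRZ tau k * (v - u)) by (apply Hk; lra).
    apply HF; [apply Hmap; lra | nra | apply Hmap; lra |].
    intros s Hin Hs'.
    (* [s = G (u + w)] with [u + w] in [(u, v)], so [Gi s = u + w] is a break of the composite *)
    set (w := (s - G u) / powerRZ tau k).
    assert (Ew : powerRZ tau k * w = s - G u) by (unfold w; field; lra).
    assert (Hw : 0 < w < v - u) by (split; nra).
    assert (HGy : G (u + w) = s) by (rewrite Hk by lra; lra).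
    apply (Hs (u + w)); [| lra].
    apply in_or_app; right. rewrite <- (Hinv (u + w)) by lra. rewrite HGy. apply in_map, Hin.
Qed.

(* [is_Ftau f] unfolds to
   [(forall x, x < 0 \/ 1 < x -> f x = x) /\ f 0 = 0 /\ f 1 = 1 /\ tau_subdivision 0 1 f]. *)
Definition tau_subdivision (lo hi : R) (f : R -> R) : Prop :=
  exists (n : nat) (xs : nat -> R) (ks : nat -> Z),
    xs 0%nat = lo /\ xs n = hi /\
    (forall i, (i < n)%nat -> xs i < xs (S i)) /\
    (forall i, (i <= n)%nat -> in_Ztau (xs i)) /\
    (forall i, (i < n)%nat -> forall y, xs i <= y <= xs (S i) ->
        f y = f (xs i) + powerRZ tau (ks i) * (y - xs i)).

Lemma tau_subdivision_single lo hi f :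
  lo < hi -> in_Ztau lo -> in_Ztau hi -> tau_affine_on f lo hi -> tau_subdivision lo hi f.
Proof.
  intros Hlh Zlo Zhi [k Hk].
  exists 1%nat, (fun i => match i with O => lo | _ => hi end), (fun _ => k).
  repeat split; try reflexivity.
  - intros i Hi. replace i with 0%nat by lia. exact Hlh.
  - intros [| i] _; assumption.
  - intros i Hi. replace i with 0%nat by lia. exact Hk.
Qed.

Lemma tau_subdivision_concat lo m hi f :
  tau_subdivision lo m f -> tau_subdivision m hi f -> tau_subdivision lo hi f.
Proof.
  intros (n1 & xs1 & ks1 & A0 & An & Ainc & AZ & Aaff) (n2 & xs2 & ks2 & B0 & Bn & Binc & BZ & Baff).
  pose (xs i := if (i <=? n1)%nat then xs1 i else xs2 (i - n1)%nat).
  pose (ks i := if (i <? n1)%nat then ks1 i else ks2 (i - n1)%nat).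
  assert (Hl : forall i, (i <= n1)%nat -> xs i = xs1 i).
  { intros i Hi. unfold xs. destruct (Nat.leb_spec i n1); [reflexivity | lia]. }
  assert (Hr : forall i, (n1 <= i)%nat -> xs i = xs2 (i - n1)%nat).
  { intros i Hi. unfold xs. destruct (Nat.leb_spec i n1); [| reflexivity].
    replace i with n1 by lia. rewrite Nat.sub_diag, An, B0. reflexivity. }
  exists (n1 + n2)%nat, xs, ks. repeat split.
  - rewrite Hl by lia. exact A0.
  - rewrite Hr by lia. replace (n1 + n2 - n1)%nat with n2 by lia. exact Bn.
  - intros i Hi. destruct (Nat.lt_ge_cases i n1).
    + rewrite !Hl by lia. apply Ainc; lia.
    + rewrite !Hr by lia. replace (S i - n1)%nat with (S (i - n1)) by lia. apply Binc; lia.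
  - intros i Hi. destruct (Nat.le_ge_cases i n1).
    + rewrite Hl by lia. apply AZ; lia.
    + rewrite Hr by lia. apply BZ; lia.
  - intros i Hi y Hy. unfold ks. destruct (Nat.ltb_spec i n1).
    + rewrite (Hl i), (Hl (S i)) in Hy by lia. rewrite (Hl i) by lia.
      apply Aaff; [lia | exact Hy].
    + rewrite (Hr i), (Hr (S i)) in Hy by lia. rewrite (Hr i) by lia.
      replace (S i - n1)%nat with (S (i - n1)) in Hy by lia.
      apply Baff; [lia | exact Hy].
Qed.

Lemma tau_pl_breaks_drop lo hi lo' hi' s S f :
  tau_pl_breaks lo hi (s :: S) f -> lo <= lo' -> hi' <= hi -> ~ (lo' < s < hi') ->
  tau_pl_breaks lo' hi' S f.
Proof.
  intros H Hlo Hhi Hs u v Hu Huv Hv HS. apply H; try lra.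
  intros t [<- | Ht]; [intro; apply Hs; lra | apply HS, Ht].
Qed.

Lemma tau_subdivision_of_breaks f S : (forall s, In s S -> in_Ztau s) ->
  forall lo hi, lo < hi -> in_Ztau lo -> in_Ztau hi -> tau_pl_breaks lo hi S f -> tau_subdivision lo hi f.
Proof.
  induction S as [| s S IH]; intros ZS lo hi Hlh Zlo Zhi H.
  - apply tau_subdivision_single; auto. apply H; try lra. intros s [].
  - assert (ZS' : forall t, In t S -> in_Ztau t) by (intros t Ht; apply ZS; right; exact Ht).
    destruct (Rlt_dec lo s) as [Hls | Hls]; [destruct (Rlt_dec s hi) as [Hsh | Hsh] |].
    + assert (Zs : in_Ztau s) by (apply ZS; left; reflexivity).
      apply tau_subdivision_concat with s; apply IH; auto;
        apply (tau_pl_breaks_drop lo hi _ _ s); auto; lra.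
    + apply IH; auto. apply (tau_pl_breaks_drop lo hi _ _ s); auto; lra.
    + apply IH; auto. apply (tau_pl_breaks_drop lo hi _ _ s); auto; lra.
Qed.

Lemma find_interval (xs : nat -> R) n y : (forall i, (i < n)%nat -> xs i < xs (S i)) ->
  xs 0%nat <= y < xs n -> exists i, (i < n)%nat /\ xs i <= y < xs (S i).
Proof.
  induction n as [| n IH]; intros Hinc Hy; [lra |].
  destruct (Rlt_le_dec y (xs n)) as [Hyn | Hyn].
  - destruct IH as [i [Hi Hxi]]; [intros i Hi; apply Hinc; lia | lra |].
    exists i. split; [lia | exact Hxi].
  - exists n. split; [lia | lra].
Qed.

Lemma tau_pl_of_subdivision lo hi f : tau_subdivision lo hi f -> tau_pl lo hi f.
Proof.
  intros (n & xs & ks & H0 & Hn & Hinc & HZ & Haff).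
  exists (map xs (seq 0 (S n))). split.
  - intros s Hs. apply in_map_iff in Hs as [i [<- Hi]]. apply in_seq in Hi. apply HZ. lia.
  - intros u v Hu Huv Hv Hs.
    destruct (find_interval xs n u Hinc) as [i [Hi Hui]]; [lra |].
    assert (Hvi : v <= xs (S i)).
    { destruct (Rle_dec v (xs (S i))) as [Hle | Hgt]; [exact Hle |].
      exfalso. apply (Hs (xs (S i))); [apply in_map, in_seq; lia | lra]. }
    exists (ks i). intros y Hy. rewrite (Haff i Hi y), (Haff i Hi u) by lra. ring.
Qed.

Lemma tau_subdivision_Ztau lo hi f : tau_subdivision lo hi f -> in_Ztau (f lo) ->
  forall y, lo <= y <= hi -> in_Ztau y -> in_Ztau (f y).
Proof.
  intros (n & xs & ks & H0 & Hn & Hinc & HZ & Haff) Zlo y Hy Zy.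
  assert (Hnodes : forall i, (i <= n)%nat -> in_Ztau (f (xs i))).
  { induction i as [| i IH]; intros Hi; [rewrite H0; exact Zlo |].
    assert (xs i < xs (S i)) by (apply Hinc; lia).
    rewrite (Haff i ltac:(lia) (xs (S i))) by lra.
    apply Ztau_add; [apply IH; lia |].
    apply Ztau_mul; [apply Ztau_powerRZ | apply Ztau_sub; apply HZ; lia]. }
  destruct (Req_dec y hi) as [-> | Hyhi]; [rewrite <- Hn; apply Hnodes; lia |].
  destruct (find_interval xs n y Hinc) as [i [Hi Hyi]]; [lra |].
  rewrite (Haff i Hi y) by lra.
  apply Ztau_add; [apply Hnodes; lia |].
  apply Ztau_mul; [apply Ztau_powerRZ | apply Ztau_sub; [exact Zy | apply HZ; lia]].
Qed.

Lemma Ftau_tau_pl g : is_Ftau g -> tau_pl 0 1 g.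
Proof. intros (_ & _ & _ & Hsub). exact (tau_pl_of_subdivision 0 1 g Hsub). Qed.

Lemma Ftau_of_tau_pl f : (forall x, (x < 0 \/ 1 < x) -> f x = x) -> f 0 = 0 -> f 1 = 1 ->
  tau_pl 0 1 f -> is_Ftau f.
Proof.
  intros Hout H0 H1 [S [ZS HS]]. split; [exact Hout | split; [exact H0 | split; [exact H1 |]]].
  apply (tau_subdivision_of_breaks f S ZS); [lra | exact Ztau_0 | exact Ztau_1 | exact HS].
Qed.

Lemma Ftau_fixes g : is_Ftau g -> forall x, x <= 0 \/ 1 <= x -> g x = x.
Proof.
  intros (Hout & H0 & H1 & _) x Hx.
  destruct (Req_dec x 0) as [-> | ]; [exact H0 |].
  destruct (Req_dec x 1) as [-> | ]; [exact H1 |].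
  apply Hout. lra.
Qed.

Lemma Ftau_Ztau g : is_Ftau g -> forall y, in_Ztau y -> in_Ztau (g y).
Proof.
  intros Fg y Zy. destruct (Rle_dec 0 y); [destruct (Rle_dec y 1) |].
  - destruct Fg as (_ & H0 & _ & Hsub). apply (tau_subdivision_Ztau 0 1); auto.
    rewrite H0. exact Ztau_0.
  - rewrite Ftau_fixes by (assumption || lra). exact Zy.
  - rewrite Ftau_fixes by (assumption || lra). exact Zy.
Qed.

Lemma maps01_of_Ftau_left_inverse g gi : is_Ftau gi -> (forall x, gi (g x) = x) ->
  forall x, 0 <= x <= 1 -> 0 <= g x <= 1.
Proof.
  intros Fgi I x Hx.
  destruct (Rle_dec 0 (g x)); [destruct (Rle_dec (g x) 1) |]; [lra | |];
    exfalso; rewrite <- (I x), (Ftau_fixes gi Fgi) in Hx by lra; lra.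
Qed.

(** * A PL homeomorphism from [0,1] onto [a,b] *)

Definition tau_kink (x0 y0 : R) (k k' : Z) (y : R) : R :=
  if Rle_dec y x0 then y0 + powerRZ tau k * (y - x0) else y0 + powerRZ tau k' * (y - x0).

Lemma tau_kink_left x0 y0 k k' y : y <= x0 -> tau_kink x0 y0 k k' y = y0 + powerRZ tau k * (y - x0).
Proof. intros H. unfold tau_kink. destruct (Rle_dec y x0); [reflexivity | contradiction]. Qed.

Lemma tau_kink_right x0 y0 k k' y : x0 <= y -> tau_kink x0 y0 k k' y = y0 + powerRZ tau k' * (y - x0).
Proof.
  intros H. unfold tau_kink. destruct (Rle_dec y x0); [| reflexivity].
  replace y with x0 by lra. ring.
Qed.

Lemma tau_kink_increasing x0 y0 k k' : strict_increasing (tau_kink x0 y0 k k').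
Proof.
  intros y z Hyz. pose proof (powerRZ_lt tau k tau_pos). pose proof (powerRZ_lt tau k' tau_pos).
  destruct (Rle_dec z x0); [rewrite !tau_kink_left by lra; nra |].
  destruct (Rle_dec y x0).
  - rewrite tau_kink_left, tau_kink_right by lra. nra.
  - rewrite !tau_kink_right by lra. nra.
Qed.

Lemma tau_kink_cancel x0 y0 k k' y :
  tau_kink y0 x0 (- k) (- k') (tau_kink x0 y0 k k' y) = y.
Proof.
  pose proof (powerRZ_lt tau k tau_pos). pose proof (powerRZ_lt tau k' tau_pos).
  destruct (Rle_dec y x0).
  - rewrite (tau_kink_left x0), tau_kink_left, powerRZ_neg' by nra. field. lra.
  - rewrite (tau_kink_right x0), tau_kink_right, powerRZ_neg' by nra. field. lra.
Qed.

Lemma tau_kink_cancel_r x0 y0 k k' y :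
  tau_kink x0 y0 k k' (tau_kink y0 x0 (- k) (- k') y) = y.
Proof.
  rewrite <- (Z.opp_involutive k) at 1. rewrite <- (Z.opp_involutive k') at 1.
  apply tau_kink_cancel.
Qed.

Lemma tau_kink_Ztau x0 y0 k k' y : in_Ztau x0 -> in_Ztau y0 -> in_Ztau y ->
  in_Ztau (tau_kink x0 y0 k k' y).
Proof.
  intros Zx0 Zy0 Zy. unfold tau_kink.
  destruct (Rle_dec y x0); apply Ztau_add; auto; apply Ztau_mul; auto using Ztau_powerRZ, Ztau_sub.
Qed.

Lemma tau_kink_tau_pl lo hi x0 y0 k k' : in_Ztau x0 -> tau_pl lo hi (tau_kink x0 y0 k k').
Proof.
  intros Zx0. exists (x0 :: nil). split; [intros s [<- | []]; exact Zx0 |].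
  intros u v _ Huv _ Hs. destruct (Rle_dec v x0).
  - exists k. intros y Hy. rewrite !tau_kink_left by lra. ring.
  - destruct (Rle_dec x0 u).
    + exists k'. intros y Hy. rewrite !tau_kink_right by lra. ring.
    + exfalso. apply (Hs x0); [left; reflexivity | lra].
Qed.

(* [x = (L' - τ^(m+1) L) / τ^m] solves the equation because [τ^(m-1) - τ^(m+1) = τ^m];
   the bracket on [m] puts [x] in [(0, L)]. *)
Lemma tau_two_slopes L L' : 0 < L -> 0 < L' -> in_Ztau L -> in_Ztau L' ->
  exists x m, 0 < x < L /\ in_Ztau x /\
    powerRZ tau (m - 1) * x + powerRZ tau (m + 1) * (L - x) = L'.
Proof.
  intros HL HL' ZL ZL'.
  destruct (tau_powerRZ_bracket (L' / L)) as [m [Hm1 Hm2]]; [apply Rdiv_lt_0_compat; lra |].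
  exists ((L' - powerRZ tau (m + 1) * L) * powerRZ tau (- m)), m.
  pose proof tau_pos as Htau. pose proof tau_sqr as Htau2.
  assert (HT : 0 < powerRZ tau m) by (apply powerRZ_lt, tau_pos).
  assert (Em1 : powerRZ tau (m - 1) = powerRZ tau m / tau)
    by (replace (m - 1)%Z with (m + -1)%Z by ring; rewrite powerRZ_add by lra; simpl; field; lra).
  assert (Ep1 : powerRZ tau (m + 1) = powerRZ tau m * tau)
    by (rewrite powerRZ_add by lra; simpl; ring).
  split; [| split].
  - rewrite Ep1 in Hm1 |- *. rewrite powerRZ_neg'. set (T := powerRZ tau m) in *.
    assert (EL : L' / L * L = L') by (field; lra).
    assert (T * tau * L < L') by (rewrite <- EL; apply Rmult_lt_compat_r; lra).
    assert (L' <= T * L) by (rewrite <- EL; apply Rmult_le_compat_r; lra).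
    assert (0 < T * tau * L) by (apply Rmult_lt_0_compat; [apply Rmult_lt_0_compat |]; lra).
    assert (ET : (L' - T * tau * L) * / T * T = L' - T * tau * L) by (field; lra).
    split; [apply Rmult_lt_0_compat; [lra | apply Rinv_0_lt_compat, HT] |].
    apply (Rmult_lt_reg_r T); [exact HT |]. rewrite ET. lra.
  - apply Ztau_mul; [apply Ztau_sub; [exact ZL' | apply Ztau_mul; [apply Ztau_powerRZ | exact ZL]] |].
    apply Ztau_powerRZ.
  - rewrite Em1, Ep1, powerRZ_neg'. set (T := powerRZ tau m) in *.
    assert (Ekey : T / tau - T * tau = T).
    { replace (T / tau - T * tau) with (T * (1 - tau * tau) / tau) by (field; lra).
      rewrite Htau2. field. lra. }
    set (x := (L' - T * tau * L) * / T).
    replace (T / tau * x + T * tau * (L - x)) with ((T / tau - T * tau) * x + T * tau * L) by ring.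
    rewrite Ekey. unfold x. field. lra.
Qed.

Lemma tau_kink_bridge lo hi lo' hi' :
  in_Ztau lo -> in_Ztau hi -> in_Ztau lo' -> in_Ztau hi' -> lo < hi -> lo' < hi' ->
  exists x0 y0 k k', lo < x0 < hi /\ in_Ztau x0 /\ in_Ztau y0 /\
    tau_kink x0 y0 k k' lo = lo' /\ tau_kink x0 y0 k k' hi = hi'.
Proof.
  intros Zlo Zhi Zlo' Zhi' Hlh Hlh'.
  destruct (tau_two_slopes (hi - lo) (hi' - lo')) as (x & m & Hx & Zx & Ex);
    auto using Ztau_sub; try lra.
  exists (lo + x), (lo' + powerRZ tau (m - 1) * x), (m - 1)%Z, (m + 1)%Z.
  split; [lra | split; [apply Ztau_add; assumption |]].
  split; [apply Ztau_add, Ztau_mul; auto using Ztau_powerRZ |].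
  split.
  - rewrite tau_kink_left by lra. ring.
  - rewrite tau_kink_right by lra.
    replace (hi - (lo + x)) with (hi - lo - x) by ring. lra.
Qed.

Definition glue3 (c d : R) (K1 K2 : R -> R) (y : R) : R :=
  if Rle_dec y c then K1 y else if Rle_dec y d then y else K2 y.

Lemma glue3_left c d K1 K2 y : y <= c -> glue3 c d K1 K2 y = K1 y.
Proof. intros H. unfold glue3. destruct (Rle_dec y c); [reflexivity | contradiction]. Qed.

Lemma glue3_right c d K1 K2 y : c <= d -> d < y -> glue3 c d K1 K2 y = K2 y.
Proof.
  intros Hcd Hy. unfold glue3.
  destruct (Rle_dec y c); [lra |]. destruct (Rle_dec y d); [lra | reflexivity].
Qed.

Lemma glue3_between c d K1 K2 y : K1 c = c -> c <= y <= d -> glue3 c d K1 K2 y = y.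
Proof.
  intros E Hy. unfold glue3. destruct (Rle_dec y c).
  - replace y with c by lra. exact E.
  - destruct (Rle_dec y d); [reflexivity | lra].
Qed.

Lemma strict_increasing_le K y z : strict_increasing K -> y <= z -> K y <= K z.
Proof. intros HK [Hlt | ->]; [left; apply HK, Hlt | right; reflexivity]. Qed.

Lemma glue3_cancel c d K1 K2 K1i K2i : c <= d ->
  strict_increasing K1 -> strict_increasing K2 -> K1 c = c -> K2 d = d ->
  (forall y, K1i (K1 y) = y) -> (forall y, K2i (K2 y) = y) ->
  forall y, glue3 c d K1i K2i (glue3 c d K1 K2 y) = y.
Proof.
  intros Hcd M1 M2 E1 E2 I1 I2 y.
  assert (E1i : K1i c = c) by (rewrite <- E1 at 1; apply I1).
  destruct (Rle_lt_dec y c) as [Hyc | Hyc]; [| destruct (Rle_lt_dec y d) as [Hyd | Hyd]].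
  - assert (K1 y <= c) by (rewrite <- E1; apply strict_increasing_le; auto).
    rewrite (glue3_left c d K1 K2), glue3_left by assumption. apply I1.
  - rewrite (glue3_between c d K1 K2), glue3_between by (assumption || lra). reflexivity.
  - assert (d < K2 y) by (rewrite <- E2; apply M2; lra).
    rewrite (glue3_right c d K1 K2), glue3_right by lra. apply I2.
Qed.

Lemma glue3_range lo hi lo' hi' c d K1 K2 : lo <= c -> c <= d -> d <= hi ->
  strict_increasing K1 -> strict_increasing K2 ->
  K1 lo = lo' -> K1 c = c -> K2 d = d -> K2 hi = hi' ->
  forall y, lo <= y <= hi -> lo' <= glue3 c d K1 K2 y <= hi'.
Proof.
  intros Hlc Hcd Hdh M1 M2 E1lo E1c E2d E2hi y Hy.
  pose proof (strict_increasing_le K1 lo c M1 Hlc).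
  pose proof (strict_increasing_le K2 d hi M2 Hdh).
  destruct (Rle_lt_dec y c) as [Hyc | Hyc]; [| destruct (Rle_lt_dec y d) as [Hyd | Hyd]].
  - pose proof (strict_increasing_le K1 lo y M1 ltac:(lra)).
    pose proof (strict_increasing_le K1 y c M1 Hyc).
    rewrite glue3_left by exact Hyc. lra.
  - rewrite glue3_between by (assumption || lra). lra.
  - pose proof (strict_increasing_le K2 d y M2 ltac:(lra)).
    pose proof (strict_increasing_le K2 y hi M2 ltac:(lra)).
    rewrite glue3_right by lra. lra.
Qed.

Lemma glue3_Ztau c d K1 K2 :
  (forall y, in_Ztau y -> in_Ztau (K1 y)) -> (forall y, in_Ztau y -> in_Ztau (K2 y)) ->
  forall y, in_Ztau y -> in_Ztau (glue3 c d K1 K2 y).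
Proof. intros Z1 Z2 y Zy. unfold glue3. destruct (Rle_dec y c); [| destruct (Rle_dec y d)]; auto. Qed.

Lemma glue3_tau_pl lo hi c d K1 K2 : lo <= c -> c <= d -> d <= hi -> in_Ztau c -> in_Ztau d ->
  K1 c = c -> K2 d = d -> tau_pl lo c K1 -> tau_pl d hi K2 -> tau_pl lo hi (glue3 c d K1 K2).
Proof.
  intros Hlc Hcd Hdh Zc Zd E1 E2 P1 P2.
  apply tau_pl_glue with c; [exact Zc | |].
  - apply (tau_pl_ext _ _ _ K1 P1). intros y Hy. apply glue3_left. lra.
  - apply tau_pl_glue with d; [exact Zd | |].
    + apply (tau_pl_ext _ _ _ (fun y => y) (tau_pl_id c d)). intros y Hy. apply glue3_between; auto.
    + apply (tau_pl_ext _ _ _ K2 P2). intros y Hy.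
      destruct (Req_dec y d) as [-> | Hyd]; [rewrite E2; apply glue3_between; auto; lra |].
      apply glue3_right; lra.
Qed.

Set Implicit Arguments.

Record tau_conjugator (a b : R) (psi psinv : R -> R) : Prop := {
  psinv_psi : forall y, psinv (psi y) = y;
  psi_psinv : forall y, psi (psinv y) = y;
  psi_0 : psi 0 = a;
  psi_1 : psi 1 = b;
  psi_range : forall y, 0 <= y <= 1 -> a <= psi y <= b;
  psinv_range : forall y, a <= y <= b -> 0 <= psinv y <= 1;
  psi_Ztau : forall y, in_Ztau y -> in_Ztau (psi y);
  psi_tau_pl : tau_pl 0 1 psi;
  psinv_tau_pl : tau_pl a b psinv }.

Unset Implicit Arguments.

Lemma tau_conjugator_exists a b c d :
  in_Ztau a -> in_Ztau b -> in_Ztau c -> in_Ztau d -> 0 < a -> a < c -> c < d -> d < b -> b < 1 ->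
  exists psi psinv, tau_conjugator a b psi psinv /\ (forall y, c <= y <= d -> psi y = y).
Proof.
  intros Za Zb Zc Zd Ha Hac Hcd Hdb Hb.
  destruct (tau_kink_bridge 0 c a c) as (x1 & y1 & k1 & k1' & Hx1 & Zx1 & Zy1 & E1a & E1c);
    auto using Ztau_0; try lra.
  destruct (tau_kink_bridge d 1 d b) as (x2 & y2 & k2 & k2' & Hx2 & Zx2 & Zy2 & E2d & E2b);
    auto using Ztau_1; try lra.
  set (K1 := tau_kink x1 y1 k1 k1') in *. set (K1i := tau_kink y1 x1 (- k1) (- k1')).
  set (K2 := tau_kink x2 y2 k2 k2') in *. set (K2i := tau_kink y2 x2 (- k2) (- k2')).
  assert (I1 : forall y, K1i (K1 y) = y) by apply tau_kink_cancel.
  assert (I2 : forall y, K2i (K2 y) = y) by apply tau_kink_cancel.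
  assert (E1ia : K1i a = 0) by (rewrite <- E1a; apply I1).
  assert (E1ic : K1i c = c) by (rewrite <- E1c at 1; apply I1).
  assert (E2id : K2i d = d) by (rewrite <- E2d at 1; apply I2).
  assert (E2ib : K2i b = 1) by (rewrite <- E2b; apply I2).
  pose proof (tau_kink_increasing x1 y1 k1 k1') as M1.
  pose proof (tau_kink_increasing x2 y2 k2 k2') as M2.
  pose proof (tau_kink_increasing y1 x1 (- k1) (- k1')) as M1i.
  pose proof (tau_kink_increasing y2 x2 (- k2) (- k2')) as M2i.
  exists (glue3 c d K1 K2), (glue3 c d K1i K2i). split; [split |].
  - apply glue3_cancel; auto. lra.
  - apply glue3_cancel; auto; [lra | apply tau_kink_cancel_r | apply tau_kink_cancel_r].
  - rewrite glue3_left by lra. exact E1a.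
  - rewrite glue3_right by lra. exact E2b.
  - apply (glue3_range 0 1); auto; lra.
  - apply (glue3_range a b); auto; lra.
  - apply glue3_Ztau; intros y Zy; apply tau_kink_Ztau; auto.
  - apply glue3_tau_pl; auto; try lra; apply tau_kink_tau_pl; auto.
  - apply glue3_tau_pl; auto; try lra; apply tau_kink_tau_pl; auto.
  - intros y Hy. apply glue3_between; auto.
Qed.

(** * Conjugation *)

Section HomomorphicImage.

Variable Phi : (R -> R) -> R -> R.
Hypothesis Phi_id : Phi (fun x => x) = (fun x => x).
Hypothesis Phi_comp : forall f g, Phi (fun x => f (g x)) = (fun y => Phi f (Phi g y)).

Lemma image_left_inverse f g : (forall x, g (f x) = x) -> forall y, Phi g (Phi f y) = y.
Proof.
  intros I y. change (Phi g (Phi f y)) with ((fun y => Phi g (Phi f y)) y).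
  rewrite <- Phi_comp.
  replace (fun x => g (f x)) with (fun x : R => x) by (apply functional_extensionality; auto).
  rewrite Phi_id. reflexivity.
Qed.

Lemma commutator_image (G H : (R -> R) -> Prop) c :
  (forall g gi, G g -> G gi -> (forall x, gi (g x) = x) -> H (Phi g)) ->
  is_commutator G c -> is_commutator H (Phi c).
Proof.
  intros GH (g & h & gi & hi & Gg & Gh & Ggi & Ghi & I1 & I2 & I3 & I4 & ->).
  exists (Phi g), (Phi h), (Phi gi), (Phi hi).
  refine (conj (GH g gi Gg Ggi I1) (conj (GH h hi Gh Ghi I3)
    (conj (GH gi g Ggi Gg I2) (conj (GH hi h Ghi Gh I4) _)))).
  repeat split; try (apply image_left_inverse; assumption).
  rewrite (Phi_comp gi (fun x => hi (g (h x)))), (Phi_comp hi (fun x => g (h x))), (Phi_comp g h).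
  reflexivity.
Qed.

Lemma gen_image (S T : (R -> R) -> Prop) f :
  (forall f, S f -> T (Phi f)) -> gen S f -> gen T (Phi f).
Proof.
  intros ST Hf. induction Hf as [| f Sf | f g _ IHf _ IHg | f g _ IHf I1 I2].
  - rewrite Phi_id. apply gen_id.
  - apply gen_base, ST, Sf.
  - rewrite Phi_comp. apply gen_comp; assumption.
  - apply gen_inv with (Phi f); [exact IHf | |]; apply image_left_inverse; assumption.
Qed.

End HomomorphicImage.

Lemma gen_injective (S : (R -> R) -> Prop) f :
  (forall g, S g -> forall x y, g x = g y -> x = y) -> gen S f -> forall x y, f x = f y -> x = y.
Proof.
  intros HS Hf. induction Hf as [| f Sf | f g _ IHf _ IHg | f g _ IHf I1 I2]; intros x y E.
  - exact E.
  - exact (HS f Sf x y E).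
  - apply IHg, IHf, E.
  - rewrite <- (I2 x), <- (I2 y), E. reflexivity.
Qed.

Lemma commutator_injective (G : (R -> R) -> Prop) c :
  is_commutator G c -> forall x y, c x = c y -> x = y.
Proof.
  intros (g & h & gi & hi & _ & _ & _ & _ & I1 & I2 & I3 & I4 & ->) x y E.
  rewrite <- (I3 x), <- (I3 y), <- (I1 (h x)), <- (I1 (h y)).
  rewrite <- (I4 (g (h x))), <- (I4 (g (h y))), <- (I2 (hi (g (h x)))), <- (I2 (hi (g (h y)))).
  rewrite E. reflexivity.
Qed.

Definition conjugate (psi psinv g : R -> R) (y : R) : R := psi (g (psinv y)).

Lemma conjugate_supported psi psinv f c d :
  (forall y, psinv (psi y) = y) -> (forall y, psi (psinv y) = y) ->
  (forall y, c <= y <= d -> psi y = y) ->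
  (forall x y, f x = f y -> x = y) -> (forall x, f x <> x -> c <= x <= d) ->
  conjugate psi psinv f = f.
Proof.
  intros I1 I2 Hid Hinj Hsupp. apply functional_extensionality. intros y. unfold conjugate.
  assert (Hfix : forall x, ~ (c <= x <= d) -> f x = x)
    by (intros x Hx; destruct (Req_dec (f x) x); [assumption | exfalso; auto]).
  assert (Hinv : forall x, c <= x <= d -> psinv x = x)
    by (intros x Hx; rewrite <- (Hid x Hx) at 1; apply I1).
  destruct (classic (c <= psinv y <= d)) as [Hin | Hout].
  - assert (Ey : psinv y = y) by (rewrite <- (I2 y) at 2; symmetry; apply Hid, Hin).
    rewrite Ey in Hin |- *.
    destruct (Req_dec (f y) y) as [-> | Hfy]; [apply Hid, Hin |].
    (* by injectivity [f] also moves [f y], which therefore lies in [[c, d]] *)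
    apply Hid, Hsupp. intro E. apply Hfy, Hinj, E.
  - rewrite (Hfix (psinv y) Hout), I2. symmetry. apply Hfix.
    intro Hy. apply Hout. rewrite Hinv; assumption.
Qed.

Section Conjugation.

Variables (a b : R) (psi psinv : R -> R).
Hypothesis Hpsi : tau_conjugator a b psi psinv.
Hypotheses (Za : in_Ztau a) (Zb : in_Ztau b) (Ha : 0 < a) (Hb : b < 1).

Lemma conjugate_id : conjugate psi psinv (fun x => x) = (fun x => x).
Proof. apply functional_extensionality. exact (psi_psinv Hpsi). Qed.

Lemma conjugate_comp f g :
  conjugate psi psinv (fun x => f (g x)) = (fun y => conjugate psi psinv f (conjugate psi psinv g y)).
Proof.
  apply functional_extensionality. intros y. unfold conjugate. rewrite (psinv_psi Hpsi). reflexivity.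
Qed.

Lemma conjugate_fixes_outside g : is_Ftau g -> forall y, y <= a \/ b <= y -> conjugate psi psinv g y = y.
Proof.
  intros Fg y Hy. unfold conjugate.
  destruct (classic (0 < psinv y < 1)) as [Hin | Hout].
  - exfalso.
    assert (Hab : a <= y <= b) by (rewrite <- (psi_psinv Hpsi y); apply (psi_range Hpsi); lra).
    assert (Hya : y = a \/ y = b) by lra.
    destruct Hya as [-> | ->]; [rewrite <- (psi_0 Hpsi) in Hin | rewrite <- (psi_1 Hpsi) in Hin];
      rewrite (psinv_psi Hpsi) in Hin; lra.
  - rewrite (Ftau_fixes g Fg); [apply (psi_psinv Hpsi) | lra].
Qed.

Lemma conjugate_Ftau_ab g gi : is_Ftau g -> is_Ftau gi -> (forall x, gi (g x) = x) ->
  is_Ftau_ab a b (conjugate psi psinv g).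
Proof.
  intros Fg Fgi I.
  pose proof (conjugate_fixes_outside g Fg) as Hfix.
  split; [| intros x Hx; apply Hfix; lra].
  apply Ftau_of_tau_pl; [intros x Hx; apply Hfix; lra | apply Hfix; lra | apply Hfix; lra |].
  assert (Hinner : tau_pl a b (fun y => g (psinv y))).
  { apply (tau_pl_comp a b 0 1 g psinv psi); auto using Ftau_tau_pl.
    - exact (psinv_tau_pl Hpsi).
    - exact (psinv_range Hpsi).
    - intros y _. apply (psi_psinv Hpsi).
    - exact (psi_Ztau Hpsi). }
  assert (Hmid : tau_pl a b (conjugate psi psinv g)).
  { apply (tau_pl_comp a b 0 1 psi (fun y => g (psinv y)) (fun z => psi (gi z))); auto.
    - exact (psi_tau_pl Hpsi).
    - intros y Hy. apply (maps01_of_Ftau_left_inverse g gi Fgi I), (psinv_range Hpsi), Hy.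
    - intros y _. rewrite I. apply (psi_psinv Hpsi).
    - intros z Zz. apply (psi_Ztau Hpsi), (Ftau_Ztau gi Fgi), Zz. }
  apply tau_pl_glue with a; [exact Za | |].
  - apply (tau_pl_ext _ _ _ _ (tau_pl_id 0 a)). intros y Hy. apply Hfix. lra.
  - apply tau_pl_glue with b; [exact Zb | exact Hmid |].
    apply (tau_pl_ext _ _ _ _ (tau_pl_id b 1)). intros y Hy. apply Hfix. lra.
Qed.

End Conjugation.

Theorem mainTheorem16 (a b : R) :
  in_Ztau a -> in_Ztau b -> 0 < a -> a < b -> b < 1 ->
  forall f : R -> R, in_Ftau' f -> is_Ftau_c a b f -> in_Ftau'_ab a b f.
Proof.
  intros Za Zb Ha Hab Hb f Hf [_ [eps [Heps Hsupp]]].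
  destruct (tau_pow_lt (Rmin eps ((b - a) / 3))) as [n Hn]; [apply Rmin_pos; lra |].
  pose proof (Rmin_l eps ((b - a) / 3)). pose proof (Rmin_r eps ((b - a) / 3)).
  pose proof (pow_lt tau n tau_pos).
  assert (Zt : in_Ztau (tau ^ n)) by apply Ztau_pow, Ztau_tau.
  destruct (tau_conjugator_exists a b (a + tau ^ n) (b - tau ^ n)) as [psi [psinv [Hpsi Hid]]];
    auto using Ztau_add, Ztau_sub; try lra.
  rewrite <- (conjugate_supported psi psinv f (a + tau ^ n) (b - tau ^ n)
    (psinv_psi Hpsi) (psi_psinv Hpsi) Hid).
  - pose proof (conjugate_id a b psi psinv Hpsi) as Cid.
    pose proof (conjugate_comp a b psi psinv Hpsi) as Ccomp.
    apply (gen_image _ Cid Ccomp (is_commutator is_Ftau)); [| exact Hf].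
    intros c Hc. apply (commutator_image _ Cid Ccomp is_Ftau); [| exact Hc].
    intros g gi Fg Fgi I. apply conjugate_Ftau_ab with gi; assumption.
  - apply (gen_injective _ f (commutator_injective is_Ftau) Hf).
  - intros x Hx. specialize (Hsupp x Hx). lra.
Qed.
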